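(* In the two-receiver star network (source transmitting to receivers $1,2$; at each slot, independently, the set of receivers that successfully receive is $\emptyset,\{1\},\{2\},\{1,2\}$ with probabilities $\lambda_\emptyset,\lambda_{\{1\}},\lambda_{\{2\}},\lambda_{\{1,2\}}$ summing to $1$; $A_k(n+1)=1$ if receiver $k$ receives at slot $n$ and $A_k(n+1)=A_k(n)+1$ otherwise), assume $\lambda_{\{1\}}+\lambda_{\{1,2\}}>0$ and $\lambda_{\{2\}}+\lambda_{\{1,2\}}>0$. If $(A_1,A_2)$ has the stationary distribution, then $$\mathrm{Cov}(A_1,A_2)=\frac{\lambda_\emptyset\lambda_{\{1,2\}}-\lambda_{\{1\}}\lambda_{\{2\}}}{(\lambda_{\{1\}}+\lambda_{\{1,2\}})(\lambda_{\{2\}}+\lambda_{\{1,2\}})(1-\lambda_\emptyset)}.$$ Moreover, if $(\lambda_{\{1\}}+\lambda_{\{1,2\}})(\lambda_{\{2\}}+\lambda_{\{1,2\}})=\lambda_{\{1,2\}}$, then the stationary distribution has product form, $\mathbb{P}(A_1=i,A_2=j)=\mathbb{P}(A_1=i)\mathbb{P}(A_2=j)$ for all $i,j\ge1$, and $\mathrm{Cov}(A_1,A_2)=0$; otherwise $\mathrm{Cov}(A_1,A_2)\neq0$.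
   Context: Ages take values in $\{1,2,\dots\}$. The process $(A_1(n),A_2(n))$ is a Markov chain on $\{1,2,\dots\}^2$ with a unique stationary distribution under the stated assumptions. *)

From Stdlib Require Import Reals Lra.
Open Scope R_scope.

(* For the
   nonnegative series used below this is the usual (order-independent) sum. *)
Definition dsum (f : nat -> nat -> R) (l : R) : Prop :=
  exists r : nat -> R, (forall i, infinite_sum (f i) (r i)) /\ infinite_sum r l.

Definition ind (b : bool) : R := if b then 1 else 0.

Definition K (l0 l1 l2 l12 : R) (a1 a2 b1 b2 : nat) : R :=
  l0 * ind (Nat.eqb b1 (S a1) && Nat.eqb b2 (S a2))
  + l1 * ind (Nat.eqb b1 1 && Nat.eqb b2 (S a2))
  + l2 * ind (Nat.eqb b1 (S a1) && Nat.eqb b2 1)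
  + l12 * ind (Nat.eqb b1 1 && Nat.eqb b2 1).

(* pi : nat -> nat -> R is a stationary distribution of the chain on
   {1,2,...}^2 (states with a zero coordinate carry no mass). *)
Definition stationary (l0 l1 l2 l12 : R) (pi : nat -> nat -> R) : Prop :=
  (forall i j, 0 <= pi i j) /\
  (forall j, pi 0%nat j = 0) /\ (forall i, pi i 0%nat = 0) /\
  dsum pi 1 /\
  (forall b1 b2, dsum (fun a1 a2 => pi a1 a2 * K l0 l1 l2 l12 a1 a2 b1 b2) (pi b1 b2)).

Definition cov_is (pi : nat -> nat -> R) (c : R) : Prop :=
  exists E1 E2 E12,
    dsum (fun i j => INR i * pi i j) E1 /\
    dsum (fun i j => INR j * pi i j) E2 /\
    dsum (fun i j => INR i * INR j * pi i j) E12 /\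
    c = E12 - E1 * E2.

From Stdlib Require Import Reals Lra Lia.
From Coquelicot Require Import Coquelicot.
Open Scope R_scope.

(* Let pi be a stationary distribution of the age chain and r i its row
   marginals.  Reading the balance equations pi = pi K entry by entry gives
   pi(1,1) = l12, a first row and a first column fed by the marginals, and the
   diagonal transport pi(i+2,j+2) = l0 pi(i+1,j+1).  From these the marginals
   are geometric: r(i+1) = mu1 (l0+l2)^i and the column sums are
   mu2 (l0+l1)^j, with mu1 = l1+l12 and mu2 = l2+l12.  The row first moments
   s i = sum_j j pi(i,j) satisfy the linear recursion
   s(i+2) = (l0+l2) r(i+1) + l0 s(i+1), so every moment needed (E A1, E A2,
   E A1 A2) is the sum of a nonnegative sequence obeying a linear recursion
   u(n+1) = v n + b u n; one general lemma sums all of them.  The covariance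
   formula then is a field identity, and under mu1 mu2 = l12 the transport
   equations are solved by the product of the marginals, by induction. *)

Lemma sum_ext (f g : nat -> R) (l : R) :
  (forall n, f n = g n) -> infinite_sum f l -> infinite_sum g l.
Proof. rewrite <- !is_series_Reals. exact (is_series_ext f g l). Qed.

Lemma sum_scal (f : nat -> R) (l c : R) :
  infinite_sum f l -> infinite_sum (fun n => c * f n) (c * l).
Proof. rewrite <- !is_series_Reals. exact (is_series_scal_l c f l). Qed.

Lemma sum_plus (f g : nat -> R) (l m : R) :
  infinite_sum f l -> infinite_sum g m -> infinite_sum (fun n => f n + g n) (l + m).
Proof. rewrite <- !is_series_Reals. exact (is_series_plus f g l m). Qed.

Lemma sum_shift (f : nat -> R) (l : R) :
  infinite_sum f l -> infinite_sum (fun n => f (S n)) (l - f 0%nat).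
Proof.
  rewrite <- !is_series_Reals. intros H. apply is_series_incr_1.
  cbn. replace (l - f 0%nat + f 0%nat) with l by ring. exact H.
Qed.

Lemma sum_unshift (f : nat -> R) (l : R) :
  infinite_sum (fun n => f (S n)) l -> infinite_sum f (f 0%nat + l).
Proof.
  rewrite <- !is_series_Reals. intros H. apply is_series_decr_1.
  cbn. replace (f 0%nat + l + - f 0%nat) with l by ring. exact H.
Qed.

(* Two unshifts at once; rows and columns are peeled at indices 0 and 1. *)
Lemma sum_unshift2 (f : nat -> R) (l : R) :
  infinite_sum (fun n => f (S (S n))) l -> infinite_sum f (f 0%nat + (f 1%nat + l)).
Proof. intros H. apply sum_unshift, (sum_unshift (fun n => f (S n))), H. Qed.

Lemma sum_point (f : nat -> R) (k : nat) :
  (forall n, n <> k -> f n = 0) -> infinite_sum f (f k).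
Proof.
  intros Hzero.
  assert (Hpart : forall n, (k <= n)%nat -> sum_f_R0 f n = f k).
  { induction n as [|n IH]; intros Hkn.
    - replace k with 0%nat by lia. reflexivity.
    - rewrite tech5. destruct (Nat.eq_dec k (S n)) as [->|Hne].
      + rewrite sum_eq_R0; [ring | intros m Hm; apply Hzero; lia].
      + rewrite IH, (Hzero (S n)) by lia. ring. }
  intros eps Heps. exists k. intros n Hn.
  rewrite Hpart by lia. unfold Rdist. rewrite Rminus_diag, Rabs_R0. exact Heps.
Qed.

Lemma sum_nonneg (f : nat -> R) (l : R) :
  (forall n, 0 <= f n) -> infinite_sum f l -> 0 <= l.
Proof.
  intros Hf H.
  assert (Hgrow : Un_growing (sum_f_R0 f)) by (intros n; rewrite tech5; specialize (Hf (S n)); lra).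
  pose proof (growing_ineq _ _ Hgrow H 0%nat). specialize (Hf 0%nat). simpl in *. lra.
Qed.

(* A nonnegative sequence with u(n+1) = v n + b u n, 0 <= b < 1 and sum v = V
   is summable with sum (u 0 + V) / (1 - b): its partial sums are increasing and
   bounded, and the limit satisfies L = u 0 + V + b L. *)
Lemma sum_linear_recursion (u v : nat -> R) (V b : R) :
  0 <= b < 1 -> (forall n, 0 <= u n) -> (forall n, 0 <= v n) ->
  infinite_sum v V -> (forall n, u (S n) = v n + b * u n) ->
  infinite_sum u ((u 0%nat + V) / (1 - b)).
Proof.
  intros Hb Hu Hv HV Hrec.
  set (U := sum_f_R0 u).
  assert (HUS : forall n, U (S n) = u 0%nat + sum_f_R0 v n + b * U n).
  { intros n. unfold U. induction n as [|n IH]; [simpl; rewrite Hrec; ring|].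
    rewrite (tech5 u (S n)), (tech5 v n), (Hrec (S n)).
    rewrite tech5 in IH |- *. lra. }
  assert (Hgrow : Un_growing U) by (intros n; unfold U; rewrite tech5; specialize (Hu (S n)); lra).
  assert (HVbound : forall n, sum_f_R0 v n <= V).
  { apply growing_ineq; [intros n; rewrite tech5; specialize (Hv (S n)); lra | exact HV]. }
  assert (HUbound : forall n, U n * (1 - b) <= u 0%nat + V).
  { intros [|n].
    - unfold U; simpl. specialize (Hu 0%nat). specialize (HVbound 0%nat).
      specialize (Hv 0%nat). simpl in HVbound. nra.
    - specialize (Hgrow n). unfold Un_growing in Hgrow. rewrite HUS in *.
      specialize (HVbound n). nra. }
  assert (Hconst : forall c, Un_cv (fun _ => c) c).
  { intros c eps Heps. exists 0%nat. intros. unfold Rdist. rewrite Rminus_diag, Rabs_R0. lra. }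
  destruct (growing_cv U Hgrow) as [L HL].
  { exists ((u 0%nat + V) / (1 - b)). intros x [n ->].
    apply Rmult_le_reg_r with (1 - b); [lra|].
    unfold Rdiv. rewrite Rmult_assoc, Rinv_l by lra. rewrite Rmult_1_r. apply HUbound. }
  assert (Hlim : Un_cv (fun n => U (S n)) (u 0%nat + V + b * L)).
  { apply (Un_cv_ext (fun n => (u 0%nat + sum_f_R0 v n) + b * U n)); [intros; rewrite HUS; ring|].
    apply CV_plus; [apply CV_plus; [apply Hconst | exact HV]|].
    apply CV_mult; [apply Hconst | exact HL]. }
  assert (Hshift : Un_cv (fun n => U (n + 1)%nat) (u 0%nat + V + b * L)).
  { apply (Un_cv_ext _ _ (fun n => f_equal U (eq_sym (Nat.add_1_r n))) _ Hlim). }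
  pose proof (UL_sequence _ _ _ (CV_shift' U 1 L HL) Hshift) as Hfix.
  replace ((u 0%nat + V) / (1 - b)) with L; [exact HL|].
  field_simplify_eq; lra.
Qed.

Lemma sum_geometric (q : R) : 0 <= q < 1 -> infinite_sum (fun n => q ^ n) (/ (1 - q)).
Proof. intros Hq. apply is_series_Reals, is_series_geom. rewrite Rabs_pos_eq; lra. Qed.

Lemma sum_arith_geometric (q c : R) : 0 <= c -> 0 <= q < 1 ->
  infinite_sum (fun n => (INR n + c) * q ^ n) ((c + q / (1 - q)) / (1 - q)).
Proof.
  intros Hc Hq.
  replace ((c + q / (1 - q)) / (1 - q)) with (((INR 0 + c) * q ^ 0 + q * / (1 - q)) / (1 - q))
    by (simpl; field; lra).
  apply (sum_linear_recursion (fun n => (INR n + c) * q ^ n) (fun n => q ^ S n)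
           (q * / (1 - q)) q); [exact Hq | | | |].
  - intros n. apply Rmult_le_pos; [pose proof (pos_INR n); lra | apply pow_le; lra].
  - intros n. apply pow_le; lra.
  - apply sum_scal, sum_geometric, Hq.
  - intros n. rewrite S_INR. simpl. ring.
Qed.

Lemma dsum_value (F : nat -> nat -> R) (L M : R) (r : nat -> R) :
  dsum F L -> (forall i, infinite_sum (F i) (r i)) -> infinite_sum r M -> L = M.
Proof.
  intros [r' [Hr' HL]] Hr HM. apply (uniqueness_sum r'); [exact HL|].
  apply (sum_ext r); [|exact HM]. intros i. apply (uniqueness_sum (F i)); auto.
Qed.

(* A double series supported on the graph of g sums along that graph; a
   balance equation whose kernel only feeds one column becomes a single series. *)
Lemma dsum_graph (F : nat -> nat -> R) (L : R) (g : nat -> nat) :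
  (forall i j, j <> g i -> F i j = 0) -> dsum F L ->
  infinite_sum (fun i => F i (g i)) L.
Proof.
  intros Hzero [r [Hr HL]]. apply (sum_ext r); [|exact HL]. intros i.
  apply (uniqueness_sum (F i)); [apply Hr | apply sum_point; auto].
Qed.

Lemma dsum_row (F : nat -> nat -> R) (L : R) (k : nat) :
  (forall i j, i <> k -> F i j = 0) -> dsum F L -> infinite_sum (F k) L.
Proof.
  intros Hzero [r [Hr HL]].
  assert (Hr0 : forall i, i <> k -> r i = 0).
  { intros i Hi. apply (uniqueness_sum (F i)); [apply Hr|].
    apply (sum_ext (fun _ => 0)); [intros j; symmetry; auto|].
    apply (sum_point (fun _ => 0) 0%nat); auto. }
  rewrite (uniqueness_sum _ _ _ HL (sum_point r k Hr0)). apply Hr.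
Qed.

Section AgeChain.

Variables (l0 l1 l2 l12 : R) (pi : nat -> nat -> R) (r : nat -> R).

Hypothesis pi_row0 : forall j, pi 0%nat j = 0.
Hypothesis pi_col0 : forall i, pi i 0%nat = 0.
Hypothesis balance : forall b1 b2,
  dsum (fun a1 a2 => pi a1 a2 * K l0 l1 l2 l12 a1 a2 b1 b2) (pi b1 b2).
Hypothesis row_sums : forall i, infinite_sum (pi i) (r i).
Hypothesis total_mass : infinite_sum r 1.

Ltac kernel_cases := unfold K, ind;
  repeat match goal with |- context [Nat.eqb ?x ?y] => destruct (Nat.eqb_spec x y) end;
  simpl; try (exfalso; lia).

(* Balance at (1,1): every state jumps there with probability l12. *)
Lemma balance_corner : pi 1%nat 1%nat = l12.
Proof.
  assert (Hrows : forall i, infinite_sum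
      (fun j => pi i j * K l0 l1 l2 l12 i j 1 1) (l12 * r i)).
  { intros i. apply (sum_ext (fun j => l12 * pi i j)); [|apply sum_scal, row_sums].
    intros j. destruct i, j; kernel_cases; rewrite ?pi_row0, ?pi_col0; ring. }
  rewrite (dsum_value _ _ _ _ (balance 1 1) Hrows (sum_scal _ _ l12 total_mass)). ring.
Qed.

(* Balance at (1,j+2): only receiver 1 succeeded, from column j+1. *)
Lemma balance_top (j : nat) :
  infinite_sum (fun i => l1 * pi i (S j)) (pi 1%nat (S (S j))).
Proof.
  apply (sum_ext (fun i => pi i (S j) * K l0 l1 l2 l12 i (S j) 1 (S (S j)))).
  - intros [|i]; kernel_cases; rewrite ?pi_row0; ring.
  - apply (dsum_graph (fun a1 a2 => pi a1 a2 * K l0 l1 l2 l12 a1 a2 1 (S (S j))) _ (fun _ => S j));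
      [intros i k Hk; kernel_cases; ring | apply balance].
Qed.

(* Balance at (i+2,1): only receiver 2 succeeded, from row i+1. *)
Lemma balance_left (i : nat) :
  infinite_sum (fun j => l2 * pi (S i) j) (pi (S (S i)) 1%nat).
Proof.
  apply (sum_ext (fun j => pi (S i) j * K l0 l1 l2 l12 (S i) j (S (S i)) 1)).
  - intros [|j]; kernel_cases; rewrite ?pi_col0; ring.
  - apply (dsum_row (fun a1 a2 => pi a1 a2 * K l0 l1 l2 l12 a1 a2 (S (S i)) 1) _ (S i));
      [intros k j Hk; kernel_cases; ring | apply balance].
Qed.

(* Balance at (i+2,j+2): no success, from the single state (i+1,j+1). *)
Lemma balance_interior (i j : nat) :
  pi (S (S i)) (S (S j)) = l0 * pi (S i) (S j).
Proof.
  set (F := fun a1 a2 => pi a1 a2 * K l0 l1 l2 l12 a1 a2 (S (S i)) (S (S j))).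
  assert (Hcol : infinite_sum (fun a => F a (S j)) (pi (S (S i)) (S (S j)))).
  { apply (dsum_graph F _ (fun _ => S j)); [intros k m Hm; unfold F; kernel_cases; ring | apply balance]. }
  assert (Hpoint : infinite_sum (fun a => F a (S j)) (F (S i) (S j))).
  { apply (sum_point (fun a => F a (S j))). intros k Hk. unfold F. kernel_cases; ring. }
  rewrite (uniqueness_sum _ _ _ Hcol Hpoint). unfold F. kernel_cases; ring.
Qed.

Hypotheses (l0_ge0 : 0 <= l0) (l1_ge0 : 0 <= l1) (l2_ge0 : 0 <= l2).
Hypothesis total_prob : l0 + l1 + l2 + l12 = 1.
Hypotheses (mu1_pos : l1 + l12 > 0) (mu2_pos : l2 + l12 > 0).
Hypothesis pi_ge0 : forall i j, 0 <= pi i j.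

Lemma row0_sum : r 0%nat = 0.
Proof.
  apply (uniqueness_sum (pi 0%nat)); [apply row_sums|].
  apply (sum_ext (fun _ => 0)); [intros j; rewrite pi_row0; reflexivity|].
  apply (sum_point (fun _ => 0) 0%nat); auto.
Qed.

Lemma row_sum_ge0 (i : nat) : 0 <= r i.
Proof. apply (sum_nonneg (pi i)); auto. Qed.

Lemma left_column (i : nat) : pi (S (S i)) 1%nat = l2 * r (S i).
Proof. apply (uniqueness_sum _ _ _ (balance_left i)), sum_scal, row_sums. Qed.

(* Row i+2 is row i+1 shifted right and scaled by l0, with l2 r(i+1) in front. *)
Lemma row_recursion (i : nat) : r (S (S i)) = (l0 + l2) * r (S i).
Proof.
  assert (Htail : infinite_sum (fun n => pi (S (S i)) (S (S n))) (l0 * (r (S i) - pi (S i) 0%nat))).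
  { apply (sum_ext (fun n => l0 * pi (S i) (S n))); [intros n; rewrite balance_interior; ring|].
    apply sum_scal, (sum_shift (pi (S i))), row_sums. }
  rewrite (uniqueness_sum _ _ _ (row_sums (S (S i))) (sum_unshift2 _ _ Htail)).
  rewrite pi_col0, pi_col0, left_column. ring.
Qed.

(* Solving the row recursion against total mass 1 gives r 1 = mu1. *)
Lemma row_one : r 1%nat = l1 + l12.
Proof.
  assert (Hsum : infinite_sum (fun n => r (S n)) ((r 1%nat + 0) / (1 - (l0 + l2)))).
  { apply (sum_linear_recursion (fun n => r (S n)) (fun _ => 0)); [lra | intros; apply row_sum_ge0
      | intros; lra | apply (sum_point (fun _ => 0) 0%nat); auto | intros n; rewrite row_recursion; ring]. }
  pose proof (uniqueness_sum _ _ _ (sum_shift _ _ total_mass) Hsum) as E.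
  rewrite row0_sum in E. replace (1 - (l0 + l2)) with (l1 + l12) in E by lra.
  apply (f_equal (fun x => x * (l1 + l12))) in E. field_simplify in E; lra.
Qed.

Lemma row_marginal (i : nat) : r (S i) = (l1 + l12) * (l0 + l2) ^ i.
Proof.
  induction i as [|i IH]; [rewrite row_one; ring|].
  rewrite row_recursion, IH. simpl. ring.
Qed.

Lemma column_marginal (j : nat) :
  infinite_sum (fun i => pi i (S j)) ((l2 + l12) * (l0 + l1) ^ j).
Proof.
  induction j as [|j IH].
  - assert (Htail : infinite_sum (fun n => pi (S (S n)) 1%nat) (l2 * (1 - r 0%nat))).
    { apply (sum_ext (fun n => l2 * r (S n))); [intros n; rewrite left_column; ring|].
      apply sum_scal, sum_shift, total_mass. }
    replace ((l2 + l12) * (l0 + l1) ^ 0) with (pi 0%nat 1%nat + (pi 1%nat 1%nat + l2 * (1 - r 0%nat)))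
      by (rewrite pi_row0, balance_corner, row0_sum; simpl; ring).
    apply (sum_unshift2 (fun i => pi i 1%nat)), Htail.
  - assert (Htop : pi 1%nat (S (S j)) = l1 * ((l2 + l12) * (l0 + l1) ^ j)).
    { apply (uniqueness_sum _ _ _ (balance_top j)), sum_scal, IH. }
    assert (Htail : infinite_sum (fun n => pi (S (S n)) (S (S j)))
                      (l0 * ((l2 + l12) * (l0 + l1) ^ j - pi 0%nat (S j)))).
    { apply (sum_ext (fun n => l0 * pi (S n) (S j))); [intros n; rewrite balance_interior; ring|].
      apply sum_scal, (sum_shift (fun i => pi i (S j))), IH. }
    replace ((l2 + l12) * (l0 + l1) ^ S j)
      with (pi 0%nat (S (S j)) + (pi 1%nat (S (S j)) + l0 * ((l2 + l12) * (l0 + l1) ^ j - pi 0%nat (S j))))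
      by (rewrite !pi_row0, Htop; simpl; ring).
    apply (sum_unshift2 (fun i => pi i (S (S j)))), Htail.
Qed.

Lemma top_row (j : nat) : pi 1%nat (S (S j)) = l1 * ((l2 + l12) * (l0 + l1) ^ j).
Proof. apply (uniqueness_sum _ _ _ (balance_top j)), sum_scal, column_marginal. Qed.

(* row_moment i = sum_j j pi(i,j), defined by its recursion. *)
Fixpoint row_moment (i : nat) : R :=
  match i with
  | 0%nat => 0
  | 1%nat => l12 + l1 * (2 + (l0 + l1) / (l2 + l12))
  | S (S k as m) => (l0 + l2) * r m + l0 * row_moment m
  end.

(* The first row's moment, summed with the geometric entries of top_row. *)
Lemma row_moment_first : infinite_sum (fun j => INR j * pi 1%nat j) (row_moment 1).
Proof.
  set (q := l0 + l1).
  assert (Htail : infinite_sum (fun n => INR (S (S n)) * pi 1%nat (S (S n)))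
                    (l1 * (l2 + l12) * ((2 + q / (1 - q)) / (1 - q)))).
  { apply (sum_ext (fun n => l1 * (l2 + l12) * ((INR n + 2) * q ^ n))).
    - intros n. rewrite top_row, !S_INR. unfold q. ring.
    - apply sum_scal, sum_arith_geometric; unfold q; lra. }
  replace (row_moment 1) with (INR 0 * pi 1%nat 0%nat + (INR 1 * pi 1%nat 1%nat
      + l1 * (l2 + l12) * ((2 + q / (1 - q)) / (1 - q)))).
  - apply (sum_unshift2 (fun j => INR j * pi 1%nat j)), Htail.
  - rewrite balance_corner. replace (1 - q) with (l2 + l12) by (unfold q; lra).
    unfold q. simpl. field. lra.
Qed.

(* row_moment is the first moment of every row: the transport equation
   shifts row i+1 into row i+2, raising each age by one. *)
Lemma row_moment_sum (i : nat) : infinite_sum (fun j => INR j * pi i j) (row_moment i).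
Proof.
  destruct i as [|i].
  - apply (sum_ext (fun _ => 0)); [intros j; rewrite pi_row0; ring|].
    apply (sum_point (fun _ => 0) 0%nat); auto.
  - induction i as [|i IH]; [exact row_moment_first|].
    assert (Htail : infinite_sum (fun n => INR (S (S n)) * pi (S (S i)) (S (S n)))
        (l0 * (row_moment (S i) - INR 0 * pi (S i) 0%nat) + l0 * (r (S i) - pi (S i) 0%nat))).
    { apply (sum_ext (fun n => l0 * (INR (S n) * pi (S i) (S n)) + l0 * pi (S i) (S n))).
      - intros n. rewrite balance_interior, (S_INR (S n)). ring.
      - apply sum_plus; apply sum_scal;
          [apply (sum_shift (fun j => INR j * pi (S i) j)), IH | apply (sum_shift (pi (S i))), row_sums]. }
    replace (row_moment (S (S i))) with (INR 0 * pi (S (S i)) 0%nat + (INR 1 * pi (S (S i)) 1%nat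
        + (l0 * (row_moment (S i) - INR 0 * pi (S i) 0%nat) + l0 * (r (S i) - pi (S i) 0%nat)))).
    + apply (sum_unshift2 (fun j => INR j * pi (S (S i)) j)), Htail.
    + rewrite !pi_col0, left_column. simpl. ring.
Qed.

Lemma row_moment_ge0 (i : nat) : 0 <= row_moment i.
Proof.
  apply (sum_nonneg _ _ (fun j => Rmult_le_pos _ _ (pos_INR j) (pi_ge0 i j)) (row_moment_sum i)).
Qed.

Lemma mean_age1 : infinite_sum (fun i => INR i * r i) (/ (l1 + l12)).
Proof.
  set (p := l0 + l2).
  assert (Htail : infinite_sum (fun n => INR (S n) * r (S n))
                    ((l1 + l12) * ((1 + p / (1 - p)) / (1 - p)))).
  { apply (sum_ext (fun n => (l1 + l12) * ((INR n + 1) * p ^ n))).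
    - intros n. rewrite row_marginal, S_INR. unfold p. ring.
    - apply sum_scal, sum_arith_geometric; unfold p; lra. }
  replace (/ (l1 + l12)) with (INR 0 * r 0%nat + (l1 + l12) * ((1 + p / (1 - p)) / (1 - p))).
  - apply (sum_unshift (fun i => INR i * r i)), Htail.
  - replace (1 - p) with (l1 + l12) by (unfold p; lra).
    replace p with (1 - (l1 + l12)) by (unfold p; lra). simpl. field. lra.
Qed.

Lemma mean_age2 : infinite_sum row_moment (/ (l2 + l12)).
Proof.
  assert (Htail : infinite_sum (fun n => row_moment (S n))
      ((row_moment 1 + (l0 + l2) * (1 - r 0%nat)) / (1 - l0))).
  { apply (sum_linear_recursion (fun n => row_moment (S n)) (fun n => (l0 + l2) * r (S n)));
      [lra | intros; apply row_moment_ge0 | intros; apply Rmult_le_pos; [lra | apply row_sum_ge0]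
      | apply sum_scal, sum_shift, total_mass | reflexivity]. }
  replace (/ (l2 + l12)) with (row_moment 0 + (row_moment 1 + (l0 + l2) * (1 - r 0%nat)) / (1 - l0)).
  - apply (sum_unshift row_moment), Htail.
  - rewrite row0_sum. simpl. replace l0 with (1 - l1 - l2 - l12) by lra.
    field. repeat split; lra.
Qed.

(* E A1 A2, by summing i * row_moment i through its linear recursion. *)
Lemma mixed_moment :
  infinite_sum (fun i => INR i * row_moment i)
    ((1 - l0 + (l0 * l12 - l1 * l2)) / ((l1 + l12) * (l2 + l12) * (1 - l0))).
Proof.
  set (p := l0 + l2).
  set (V := l0 * (/ (l2 + l12) - row_moment 0) + p * (1 - r 0%nat)
            + p * (/ (l1 + l12) - INR 0 * r 0%nat)).
  assert (Htail : infinite_sum (fun n => INR (S n) * row_moment (S n))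
                    ((INR 1 * row_moment 1 + V) / (1 - l0))).
  { apply (sum_linear_recursion (fun n => INR (S n) * row_moment (S n))
             (fun n => l0 * row_moment (S n) + p * r (S n) + p * (INR (S n) * r (S n)))).
    - lra.
    - intros n. apply Rmult_le_pos; [apply pos_INR | apply row_moment_ge0].
    - intros n. pose proof (row_moment_ge0 (S n)). pose proof (row_sum_ge0 (S n)).
      pose proof (Rmult_le_pos _ _ (pos_INR (S n)) (row_sum_ge0 (S n))). unfold p. nra.
    - apply sum_plus; [apply sum_plus|]; apply sum_scal;
        [apply (sum_shift row_moment), mean_age2 | apply sum_shift, total_mass
        | apply (sum_shift (fun i => INR i * r i)), mean_age1].
    - intros n. change (row_moment (S (S n))) with (p * r (S n) + l0 * row_moment (S n)).
      rewrite (S_INR (S n)). ring. }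
  replace ((1 - l0 + (l0 * l12 - l1 * l2)) / ((l1 + l12) * (l2 + l12) * (1 - l0)))
    with (INR 0 * row_moment 0 + (INR 1 * row_moment 1 + V) / (1 - l0)).
  - apply (sum_unshift (fun i => INR i * row_moment i)), Htail.
  - unfold V, p. rewrite row0_sum. simpl. replace l0 with (1 - l1 - l2 - l12) by lra.
    field. repeat split; lra.
Qed.

Theorem covariance :
  cov_is pi ((l0 * l12 - l1 * l2) / ((l1 + l12) * (l2 + l12) * (1 - l0))).
Proof.
  exists (/ (l1 + l12)), (/ (l2 + l12)),
    ((1 - l0 + (l0 * l12 - l1 * l2)) / ((l1 + l12) * (l2 + l12) * (1 - l0))).
  split; [|split; [|split]].
  - exists (fun i => INR i * r i). split; [intros i; apply sum_scal, row_sums | exact mean_age1].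
  - exists row_moment. split; [exact row_moment_sum | exact mean_age2].
  - exists (fun i => INR i * row_moment i). split; [|exact mixed_moment].
    intros i. apply (sum_ext (fun j => INR i * (INR j * pi i j))); [intros j; ring|].
    apply sum_scal, row_moment_sum.
  - field. repeat split; lra.
Qed.

(* When mu1 mu2 = l12, pi is the product of its marginals: the identities
   l1 = mu1 (l0+l1), l2 = mu2 (l0+l2), l0 = (l0+l2)(l0+l1) make the product
   satisfy the same first row, first column and diagonal transport. *)
Lemma product_form : (l1 + l12) * (l2 + l12) = l12 ->
  forall i j, pi (S i) (S j) = r (S i) * ((l2 + l12) * (l0 + l1) ^ j).
Proof.
  intros Hprod.
  assert (K1 : l1 = (l1 + l12) * (l0 + l1)).
  { replace (l0 + l1) with (1 - (l2 + l12)) by lra. nra. }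
  assert (K2 : l2 = (l2 + l12) * (l0 + l2)).
  { replace (l0 + l2) with (1 - (l1 + l12)) by lra. nra. }
  assert (K0 : l0 = (l0 + l2) * (l0 + l1)).
  { replace (l0 + l2) with (1 - (l1 + l12)) by lra.
    replace (l0 + l1) with (1 - (l2 + l12)) by lra. nra. }
  intros i; rewrite row_marginal; induction i as [|i IH]; intros [|j].
  - rewrite balance_corner. simpl. lra.
  - rewrite top_row, K1 at 1. simpl. ring.
  - rewrite left_column, row_marginal, K2 at 1. simpl. ring.
  - rewrite balance_interior, IH, K0 at 1. simpl. ring.
Qed.

End AgeChain.

Theorem mainTheorem3 (l0 l1 l2 l12 : R) (pi : nat -> nat -> R) :
  0 <= l0 -> 0 <= l1 -> 0 <= l2 -> 0 <= l12 ->
  l0 + l1 + l2 + l12 = 1 ->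
  l1 + l12 > 0 -> l2 + l12 > 0 ->
  stationary l0 l1 l2 l12 pi ->
  cov_is pi ((l0 * l12 - l1 * l2) / ((l1 + l12) * (l2 + l12) * (1 - l0))) /\
  ((l1 + l12) * (l2 + l12) = l12 ->
     (forall i j (m1 m2 : R), (1 <= i)%nat -> (1 <= j)%nat ->
        infinite_sum (fun j' => pi i j') m1 ->
        infinite_sum (fun i' => pi i' j) m2 ->
        pi i j = m1 * m2) /\
     cov_is pi 0) /\
  ((l1 + l12) * (l2 + l12) <> l12 ->
     exists c, cov_is pi c /\ c <> 0).
Proof.
  intros H0 H1 H2 _ Htot Hmu1 Hmu2 [Hpos [Hrow0 [Hcol0 [[r [Hrows Hmass]] Hbal]]]].
  assert (Hcov : cov_is pi ((l0 * l12 - l1 * l2) / ((l1 + l12) * (l2 + l12) * (1 - l0))))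
    by (eapply covariance; eassumption).
  assert (Hnum : l0 * l12 - l1 * l2 = l12 - (l1 + l12) * (l2 + l12)).
  { replace l0 with (1 - l1 - l2 - l12) by lra. ring. }
  assert (Hden : (l1 + l12) * (l2 + l12) * (1 - l0) <> 0).
  { apply Rgt_not_eq, Rmult_lt_0_compat; [apply Rmult_lt_0_compat|]; lra. }
  split; [exact Hcov | split].
  - intros Hprod. split.
    + intros [|i] [|j] m1 m2 Hi Hj Hm1 Hm2; try lia.
      rewrite (uniqueness_sum _ _ _ Hm1 (Hrows (S i))),
        (uniqueness_sum _ _ _ Hm2 (column_marginal _ _ _ _ _ _ Hrow0 Hcol0 Hbal Hrows Hmass j)).
      eapply product_form; eassumption.
    + rewrite Hnum, Hprod, Rminus_diag, Rdiv_0_l in Hcov. exact Hcov.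
  - intros Hne. exists ((l0 * l12 - l1 * l2) / ((l1 + l12) * (l2 + l12) * (1 - l0))).
    split; [exact Hcov|]. rewrite Hnum.
    apply Rmult_integral_contrapositive_currified; [lra | apply Rinv_neq_0_compat, Hden].
Qed.
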